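(* Let $n \ge 2$ and let $f : \mathbb{R}^n \to \mathbb{R}$ be a function in $\mathcal{N}^*_n$. Then every level set $f^{-1}(y)$, $y \in \mathbb{R}$, is homeomorphic to an open (possibly empty) subset of $\mathbb{R}^{n-1}$. Consequently, $f$ has unbounded level components, i.e. for every $y\in\mathbb{R}$ every path component of $f^{-1}(y)$ is unbounded.
   Context: $\mathcal{N}^*_n$ (non-singular functions) is the set of functions $\mathbb{R}^n\to\mathbb{R}$ of the form $\nu_\kappa\circ\ell_\kappa\circ\cdots\circ\nu_0\circ\ell_0$ computed by a layered feed-forward network with input dimension $n$, output dimension 1, and all hidden layers of width exactly $n$, where: the activation $\psi:\mathbb{R}\to\mathbb{R}$ is some continuous one-to-one function, each $\nu_i$ applies $\psi$ coordinatewise, each $\ell_i$ ($i<\kappa$) is an affine map $\mathbb{R}^n\to\mathbb{R}^n$ with nonsingular weight matrix, and $\ell_\kappa:\mathbb{R}^n\to\mathbb{R}$ is an affine map with nonzero weight vector. *)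

From HB Require Import structures.
From mathcomp Require Import all_boot all_order all_algebra.
From mathcomp Require Import all_classical all_reals all_analysis.
Set Implicit Arguments. Unset Strict Implicit. Unset Printing Implicit Defensive.
Import Order.TTheory GRing.Theory Num.Theory.
Import numFieldNormedType.Exports.
Local Open Scope classical_set_scope.
Local Open Scope ring_scope.

Section Defs.
Variable R : realType.

Definition layer (n : nat) (psi : R -> R) (Ab : 'M[R]_n * 'rV[R]_n)
  (x : 'rV[R]_n) : 'rV[R]_n := map_mx psi (x *m Ab.1 + Ab.2).

(* nu_kappa o l_kappa o ... o nu_0 o l_0 ; Ls = [l_0; ...; l_{kappa-1}],
   final affine map l_kappa(x) = x . w + c *)
Definition net_fun (n : nat) (psi : R -> R) (Ls : seq ('M[R]_n * 'rV[R]_n))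
  (w : 'rV[R]_n) (c : R) : 'rV[R]_n -> R :=
  fun x => psi (((foldl (fun v Ab => layer psi Ab v) x Ls) *m w^T) 0 0 + c).

Definition nonsingular_net (n : nat) (f : 'rV[R]_n -> R) : Prop :=
  exists psi : R -> R, continuous psi /\ injective psi /\
  exists (Ls : seq ('M[R]_n * 'rV[R]_n)) (w : 'rV[R]_n) (c : R),
    (forall Ab, Ab \in Ls -> Ab.1 \in unitmx) /\ w != 0 /\
    f = net_fun psi Ls w c.

Definition homeomorphic_sets (T U : topologicalType) (A : set T) (B : set U)
  : Prop :=
  exists (g : T -> U) (h : U -> T),
    {within A, continuous g} /\ {within B, continuous h} /\
    (forall x, A x -> B (g x) /\ h (g x) = x) /\
    (forall u, B u -> A (h u) /\ g (h u) = u).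

Definition path_component (n : nat) (S : set 'rV[R]_n) (x : 'rV[R]_n)
  : set 'rV[R]_n :=
  [set z | exists gamma : R -> 'rV[R]_n,
     {within `[0, 1], continuous gamma} /\
     (forall t, t \in `[0, 1] -> S (gamma t)) /\
     gamma 0 = x /\ gamma 1 = z].

End Defs.

From HB Require Import structures.
From mathcomp Require Import all_boot all_order all_algebra.
From mathcomp Require Import all_classical all_reals all_analysis.
From mathcomp Require Import lra.
Set Implicit Arguments. Unset Strict Implicit. Unset Printing Implicit Defensive.
Import Order.TTheory GRing.Theory Num.Theory.
Import numFieldNormedType.Exports.
Local Open Scope classical_set_scope.
Local Open Scope ring_scope.

(** Each hidden layer x |-> psi (x A + b) is an open embedding of R^n into
    itself: the affine part is a homeomorphism, and a continuous injective
    psi : R -> R is a homeomorphism onto an open interval.  Hence the hidden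
    layers compose to an open embedding h, and f x = psi (h x . w + c) with
    psi injective, so a level set of f is either empty or the preimage under h
    of an affine hyperplane H.  Projecting H away from a coordinate k with
    w_k <> 0 identifies it with R^(n-1), and the level set with the open set
    of parameters of the points of H in the open range of h.

    For unboundedness, let a closed level set L be homeomorphic via g to an
    open U, and suppose the path component P of x0 in L has norm at most M.
    Then K = L /\ {|x| <= M} is compact, and so is C = g(K), a subset of U.
    A ray in U from g x0 must leave C before leaving U: otherwise the
    supremum of the lengths of its segments inside U would give a point of
    C, hence of U, past which the ray could be continued.  Pulling such a
    segment back to L gives a path from x0 to a point of L outside K, hence
    of norm > M, although it lies in P. *)

Section matrix_continuity.
Variable R : realType.

Lemma continuous_mx_entries {T : topologicalType} m n (f : T -> 'M[R]_(m, n)) x :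
  (forall i j, {for x, continuous (fun y => f y i j)}) -> {for x, continuous f}.
Proof.
move=> fc A /nbhs_ballP[e /= e0 eA].
have : \forall y \near x, forall ij : 'I_m * 'I_n,
    ball (f x ij.1 ij.2) e (f y ij.1 ij.2).
  by apply: filter_forall => ij; apply: fc; exact: nbhsx_ballx.
by apply: filterS => y fy; apply: eA; split => // i j; exact: (fy (i, j)).
Qed.

Lemma affine_mx_continuous m n p (B : 'M[R]_(n, p)) (c : 'M[R]_(m, p)) :
  continuous (fun x : 'M[R]_(m, n) => x *m B + c).
Proof.
move=> x; apply: continuous_mx_entries => i j.
have -> : (fun y : 'M[R]_(m, n) => (y *m B + c) i j) =
    fun y => \sum_k y i k * B k j + c i j.
  by apply/funext => y; rewrite !mxE.
apply: continuousD; last exact: cst_continuous.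
apply: continuous_big => [|k _ y]; first exact: add_continuous.
by apply: continuousM; [exact: (@coord_continuous _ _ _ i k) | exact: cst_continuous].
Qed.

Lemma map_mx_continuous m n (psi : R -> R) : continuous psi ->
  continuous (map_mx psi : 'M[R]_(m, n) -> 'M[R]_(m, n)).
Proof.
move=> psic x; apply: continuous_mx_entries => i j.
have -> : (fun y : 'M[R]_(m, n) => map_mx psi y i j) = psi \o (fun y => y i j).
  by apply/funext => y; rewrite mxE.
by apply: continuous_comp; [exact: coord_continuous | exact: psic].
Qed.

Lemma col'_continuous m n (k : 'I_n) :
  continuous (col' k : 'M[R]_(m, n) -> 'M[R]_(m, n.-1)).
Proof.
move=> x; apply: continuous_mx_entries => i j.
have -> : (fun y : 'M[R]_(m, n) => col' k y i j) = fun y => y i (lift k j).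
  by apply/funext => y; rewrite mxE.
exact: coord_continuous.
Qed.

End matrix_continuity.

Lemma ray_continuous (R : realType) (V : normedModType R) (z e : V) :
  continuous (fun r : R => z + r *: e).
Proof.
move=> r; apply: cvgD; first exact: cvg_cst.
by apply: cvgZ; [exact: cvg_id | exact: cvg_cst].
Qed.

Definition open_embedding {T U : topologicalType} (h : T -> U) (hi : U -> T) :=
  [/\ continuous h, cancel h hi, open (range h) & {in range h, continuous hi}].

Lemma open_embedding_id {T : topologicalType} : open_embedding (@id T) id.
Proof.
rewrite /open_embedding image_id; split=> //.
- by move=> x; exact: cvg_id.
- exact: openT.
- by move=> x _; exact: cvg_id.
Qed.

Lemma open_embedding_comp {T U V : topologicalType} (g : U -> V) (gi : V -> U)
    (h : T -> U) (hi : U -> T) :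
  open_embedding g gi -> open_embedding h hi -> open_embedding (g \o h) (hi \o gi).
Proof.
move=> [gc gK og gic] [hc hK oh hic]; split.
- by move=> x; apply: continuous_comp; [exact: hc | exact: gc].
- by move=> x /=; rewrite gK hK.
- rewrite openE => _ [x _ <-] /=.
  have rg : nbhs (g (h x)) (range g).
    by apply: open_nbhs_nbhs; split=> //; exists (h x).
  have rh : nbhs (g (h x)) (gi @^-1` range h).
    apply: (gic _ (mem_set (imageT _ _))); rewrite gK.
    by apply: open_nbhs_nbhs; split=> //; exists x.
  apply: filterS2 rg rh => _ [u _ <-] [x' _ hx'].
  by exists x' => //=; rewrite hx' gK.
- move=> _ /set_mem[x _ <-] /=; apply: continuous_comp.
    exact: (gic _ (mem_set (imageT _ _))).
  by rewrite gK; exact: (hic _ (mem_set (imageT _ _))).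
Qed.

Section real_open_embeddings.
Variable R : realType.

Lemma continuous_injective_open_embedding (psi : R -> R) :
  continuous psi -> injective psi -> exists psii, open_embedding psi psii.
Proof.
move=> psic psiI.
pose psii y := xget 0 (fun x => psi x = y).
have psiK : cancel psi psii.
  move=> x; apply: psiI.
  exact: (@xgetPex _ 0 (fun x' => psi x' = psi x) (ex_intro _ x erefl)).
have nK (x : R) : {near x, cancel psi psii} by exact: filterE.
have nC (x : R) : {near x, continuous psi} by exact: filterE.
exists psii; split => //.
- rewrite openE => _ [x _ <-]; rewrite /interior.
  have := near_continuous_can_sym (nC x) (nK x).
  by apply: filterS => y <-; exists (psii y).
- move=> _ /set_mem[x _ <-].
  exact: nbhs_singleton (near_can_continuous (nK x) (nC x)).
Qed.

Lemma open_embedding_map_mx m n (psi psii : R -> R) :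
  open_embedding psi psii ->
  open_embedding (map_mx psi : 'M[R]_(m, n) -> 'M[R]_(m, n)) (map_mx psii).
Proof.
move=> [psic psiK opsi psiic].
have rangeE : range (map_mx psi : 'M[R]_(m, n) -> 'M[R]_(m, n)) =
    [set v | forall i j, range psi (v i j)].
  apply/seteqP; split => [_ [u _ <-] i j|v vr]; first by rewrite mxE; exists (u i j).
  exists (map_mx psii v) => //; apply/matrixP => i j; rewrite !mxE.
  by have [u _ <-] := vr i j; rewrite psiK.
split.
- exact: map_mx_continuous.
- by move=> v; apply/matrixP => i j; rewrite !mxE psiK.
- rewrite rangeE openE => v vr.
  have : \forall w \near v, forall ij : 'I_m * 'I_n,
      range psi ((w : 'M[R]_(m, n)) ij.1 ij.2).
    apply: (@filter_forall _ _ (fun ij (w : 'M[R]_(m, n)) => range psi (w ij.1 ij.2))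
      _ (@nbhs_filter _ v)) => ij.
    apply: (@coord_continuous _ _ _ ij.1 ij.2 v).
    by apply: open_nbhs_nbhs; split => //; exact: vr.
  by apply: filterS => w wr i j; exact: (wr (i, j)).
- rewrite rangeE => v /set_mem vr; apply: continuous_mx_entries => i j.
  have -> : (fun w => map_mx psii w i j) = psii \o (fun w => w i j).
    by apply/funext => w; rewrite mxE.
  apply: continuous_comp; first exact: coord_continuous.
  exact: psiic (mem_set (vr i j)).
Qed.

Lemma open_embedding_affine m n (A : 'M[R]_n) (b : 'M[R]_(m, n)) :
  A \in unitmx ->
  open_embedding (fun x : 'M[R]_(m, n) => x *m A + b) (fun v => (v - b) *m invmx A).
Proof.
move=> Au; rewrite /open_embedding.
have -> : range (fun x : 'M[R]_(m, n) => x *m A + b) = setT.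
  apply/seteqP; split => // v _; exists ((v - b) *m invmx A) => //.
  by rewrite mulmxKV // subrK.
split.
- exact: affine_mx_continuous.
- by move=> x; rewrite addrK mulmxK.
- exact: openT.
- have -> : (fun v => (v - b) *m invmx A) = fun v => v *m invmx A + - b *m invmx A.
    by apply/funext => v; rewrite mulmxDl mulNmx.
  by move=> v _; exact: affine_mx_continuous.
Qed.

Definition hidden_layers n (psi : R -> R) (Ls : seq ('M[R]_n * 'rV[R]_n))
    (x : 'rV[R]_n) : 'rV[R]_n :=
  foldl (fun v Ab => layer psi Ab v) x Ls.

Lemma open_embedding_layer n (psi psii : R -> R) (Ab : 'M[R]_n * 'rV[R]_n) :
  open_embedding psi psii -> Ab.1 \in unitmx ->
  exists li, open_embedding (layer psi Ab) li.
Proof.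
move=> psiE Au.
have layerE := open_embedding_comp (open_embedding_map_mx 1 n psiE)
  (open_embedding_affine Ab.2 Au).
by eexists; exact: layerE.
Qed.

Lemma open_embedding_hidden_layers n (psi psii : R -> R)
    (Ls : seq ('M[R]_n * 'rV[R]_n)) :
  open_embedding psi psii -> (forall Ab, Ab \in Ls -> Ab.1 \in unitmx) ->
  exists hi, open_embedding (hidden_layers psi Ls) hi.
Proof.
move=> psiE; elim/last_ind: Ls => [|Ls Ab IH] LsU.
  by exists id; exact: open_embedding_id.
have [hi hE] : exists hi, open_embedding (hidden_layers psi Ls) hi.
  by apply: IH => Ab' AbLs; apply: LsU; rewrite mem_rcons inE AbLs orbT.
have [li lE] : exists li, open_embedding (layer psi Ab) li.
  by apply: open_embedding_layer psiE _; apply: LsU; rewrite mem_rcons mem_head.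
have -> : hidden_layers psi (rcons Ls Ab) = layer psi Ab \o hidden_layers psi Ls.
  by apply/funext => x; rewrite /hidden_layers foldl_rcons.
by exists (hi \o li); exact: open_embedding_comp.
Qed.

End real_open_embeddings.

Section hyperplane_chart.
Variables (R : realType) (p : nat) (w : 'rV[R]_p.+1) (k : 'I_p.+1) (t : R).
Hypothesis wk : w 0 k != 0.

Definition hyperplane_lift (z : 'rV[R]_p) : 'rV[R]_p.+1 :=
  \row_i if unlift k i is Some j then z 0 j
         else (t - \sum_j z 0 j * w 0 (lift k j)) / w 0 k.

Lemma dot_row_splitE (v : 'rV[R]_p.+1) :
  (v *m w^T) 0 0 = v 0 k * w 0 k + \sum_j v 0 (lift k j) * w 0 (lift k j).
Proof.
rewrite mxE (bigD1_ord k) //=; congr (_ * _ + _); first by rewrite mxE.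
by apply: eq_bigr => j _; rewrite mxE.
Qed.

Lemma hyperplane_liftK : cancel hyperplane_lift (col' k).
Proof. by move=> z; apply/rowP => j; rewrite !mxE liftK. Qed.

Lemma hyperplane_lift_dot z : (hyperplane_lift z *m w^T) 0 0 = t.
Proof.
rewrite dot_row_splitE mxE unlift_none divfK //.
suff -> : \sum_j hyperplane_lift z 0 (lift k j) * w 0 (lift k j) =
    \sum_j z 0 j * w 0 (lift k j) by rewrite subrK.
by apply: eq_bigr => j _; rewrite mxE liftK.
Qed.

Lemma col'K_hyperplane v : (v *m w^T) 0 0 = t -> hyperplane_lift (col' k v) = v.
Proof.
move=> vt; apply/rowP => i; rewrite mxE.
case: unliftP => [j|] ->; first by rewrite mxE.
under eq_bigr => j _ do rewrite mxE.
by rewrite -vt dot_row_splitE addrK mulfK.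
Qed.

Lemma hyperplane_lift_continuous : continuous hyperplane_lift.
Proof.
move=> z; apply: continuous_mx_entries => i j.
rewrite /hyperplane_lift.
have -> : (fun y : 'rV[R]_p => (\row_i0 if unlift k i0 is Some j0 then y 0 j0
    else (t - \sum_l y 0 l * w 0 (lift k l)) / w 0 k) i j) =
  fun y => if unlift k j is Some j0 then y 0 j0
    else (t - \sum_l y 0 l * w 0 (lift k l)) / w 0 k.
  by apply/funext => y; rewrite mxE.
case: unlift => [j0|]; first exact: coord_continuous.
apply: continuousM; last exact: cst_continuous.
apply: continuousB; first exact: cst_continuous.
apply: continuous_big => [|l _ y]; first exact: add_continuous.
by apply: continuousM; [exact: (@coord_continuous _ _ _ 0 l) | exact: cst_continuous].
Qed.

End hyperplane_chart.

Lemma hyperplane_preimage_homeomorphic_open (R : realType) p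
    (h hi : 'rV[R]_p.+1 -> 'rV[R]_p.+1) (w : 'rV[R]_p.+1) (t : R) :
  open_embedding h hi -> w != 0 ->
  exists U : set 'rV[R]_p,
    open U /\ homeomorphic_sets [set x | (h x *m w^T) 0 0 = t] U.
Proof.
move=> [hc hK oh hic] w0.
have [k wk] : exists k, w 0 k != 0.
  apply/existsP; apply: contraNT w0 => /existsPn w0'.
  by apply/eqP/rowP => k; rewrite mxE; apply/eqP; rewrite -[_ == _]negbK w0'.
pose lift := hyperplane_lift w k t.
exists (lift @^-1` range h); split.
  by apply: open_comp oh => z _; exact: hyperplane_lift_continuous.
exists (col' k \o h), (hi \o lift); split; [|split; [|split]].
- apply: continuous_subspaceT => x.
  by apply: continuous_comp; [exact: hc | exact: col'_continuous].
- apply: continuous_in_subspaceT => z /set_mem[x _ hx].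
  apply: continuous_comp; first exact: hyperplane_lift_continuous.
  by rewrite -hx; exact: hic (mem_set (imageT _ _)).
- move=> x /= hxt; rewrite /lift col'K_hyperplane //.
  by split; [exists x | exact: hK].
- move=> z [x _ hx] /=; rewrite -hx hK hx; split.
    exact: hyperplane_lift_dot.
  exact: hyperplane_liftK.
Qed.

Lemma ray_escapes_compact (R : realType) (V : normedModType R) (U C : set V)
    (z e : V) :
  open U -> compact C -> C `<=` U -> U z -> e != 0 ->
  exists s, [/\ 0 <= s, forall r, 0 <= r <= s -> U (z + r *: e)
              & ~ C (z + s *: e)].
Proof.
move=> oU cC CU Uz e0; apply: contrapT => noescape.
pose ray r := z + r *: e.
pose S := [set s | 0 <= s /\ forall r, 0 <= r <= s -> U (ray r)].
have SC s : S s -> C (ray s).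
  by move=> [s0 sU]; apply: contrapT => nC; apply: noescape; exists s.
have S0 : S 0.
  split=> // r /andP[r0 r0']; have -> : r = 0 by apply/le_anti; rewrite r0 r0'.
  by rewrite /ray scale0r addr0.
have S_ub : has_ubound S.
  have [B [_ CB]] := compact_bounded cC.
  exists ((`|B| + 1 + `|z|) / `|e|) => s Ss; rewrite ler_pdivlMr ?normr_gt0 //.
  have -> : s * `|e| = `|ray s - z|.
    by rewrite /ray addrC addKr normrZ ger0_norm //; case: Ss.
  apply: le_trans (ler_normB _ _) _; rewrite lerD2r.
  by apply: (CB (`|B| + 1)) (SC s Ss); rewrite (le_lt_trans (ler_norm B)) ?ltrDl.
have supS : has_sup S by split=> //; exists 0.
have sup_ge0 : 0 <= sup S := sup_upper_bound supS S0.
have C_sup : C (ray (sup S)).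
  rewrite (closure_id C).1; last by apply: compact_closed cC; exact: norm_hausdorff.
  move=> A /(@ray_continuous _ _ z e) /(closure_sup (ex_intro _ 0 S0) S_ub) [s [Ss As]].
  by exists (ray s); split=> //; exact: SC.
have /nbhs_ballP[d /= d0 dU] : nbhs (sup S) (ray @^-1` U).
  by apply: ray_continuous; apply: open_nbhs_nbhs; split=> //; exact: CU.
have : S (sup S + d / 2).
  split=> [|r /andP[r0 rs]]; first by rewrite addr_ge0 // divr_ge0 // ltW.
  have [rlt|rge] := ltP r (sup S).
    have [s' [_ s'U] lt_s'] : exists2 s', S s' & sup S - (sup S - r) < s'.
      by apply: sup_adherent supS; rewrite subr_gt0.
    by apply: s'U; rewrite r0 /=; apply: ltW; lra.
  by apply: dU; rewrite /ball /= distrC ger0_norm ?subr_ge0 //; lra.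
by move=> /(sup_upper_bound supS); lra.
Qed.

Section path_components_of_open_images.
Variables (R : realType) (N p : nat) (L : set 'rV[R]_N) (U : set 'rV[R]_p.+1).
Variables (g : 'rV[R]_N -> 'rV[R]_p.+1) (hh : 'rV[R]_p.+1 -> 'rV[R]_N).
Hypotheses (hhc : {in U, continuous hh})
  (gK : forall x, L x -> U (g x) /\ hh (g x) = x)
  (hhK : forall z, U z -> L (hh z) /\ g (hh z) = z).

Lemma path_component_segment x0 e s : L x0 -> 0 <= s ->
  (forall r, 0 <= r <= s -> U (g x0 + r *: e)) ->
  path_component L x0 (hh (g x0 + s *: e)).
Proof.
move=> Lx0 s0 segU.
have segU01 t : 0 <= t <= 1 -> U (g x0 + t *: (s *: e)).
  by move=> /andP[t0 t1]; rewrite scalerA; apply: segU; rewrite mulr_ge0 //= ler_piMl.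
exists (fun t => hh (g x0 + t *: (s *: e))); split; [|split; [|split]].
- apply: continuous_in_subspaceT => t; rewrite inE /= in_itv /= => /segU01 Ut.
  apply: continuous_comp; first exact: ray_continuous.
  exact: hhc (mem_set Ut).
- by move=> t; rewrite in_itv /= => /segU01 /hhK[].
- by rewrite scale0r addr0 (gK Lx0).2.
- by rewrite scale1r.
Qed.

Lemma path_component_unbounded x0 : {within L, continuous g} -> open U ->
  closed L -> L x0 -> ~ bounded_set (path_component L x0).
Proof.
move=> gc oU cL Lx0 [M [_ PM]].
pose M1 := `|M| + 1.
have PM1 : path_component L x0 `<=` [set x | `|x| <= M1].
  by apply: PM; rewrite /M1 (le_lt_trans (ler_norm M)) ?ltrDl.
pose K := L `&` [set x | `|x| <= M1].
have cK : compact K.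
  apply: bounded_closed_compact.
    exists M1; split; first exact: num_real.
    by move=> r M1r x [_ xM1]; exact: le_trans xM1 (ltW M1r).
  apply: closedI => //.
  have -> : [set x : 'rV[R]_N | `|x| <= M1] = closed_ball 0 M1.
    rewrite closed_ballE ?ltr_pwDr //; apply/seteqP.
    by split => x; rewrite /closed_ball_ /= add0r normrN.
  exact: closed_ball_closed.
have cgK : compact (g @` K).
  by apply: continuous_compact cK; apply: continuous_subspaceW gc; exact: subIsetl.
have gKU : g @` K `<=` U by move=> _ [x [Lx _] <-]; exact: (gK Lx).1.
pose e : 'rV[R]_p.+1 := const_mx 1.
have e0 : e != 0 by apply/eqP => /rowP /(_ 0); rewrite !mxE; exact/eqP/oner_neq0.
have [s [s0 segU []]] := ray_escapes_compact oU cgK gKU (gK Lx0).1 e0.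
have Us : U (g x0 + s *: e) by apply: segU; rewrite s0 lexx.
exists (hh (g x0 + s *: e)); last exact: (hhK Us).2.
split; first exact: (hhK Us).1.
exact/PM1/path_component_segment.
Qed.

End path_components_of_open_images.

Lemma closed_homeomorphic_open_unbounded (R : realType) N p (L : set 'rV[R]_N)
    (U : set 'rV[R]_p.+1) x0 :
  closed L -> open U -> homeomorphic_sets L U -> L x0 ->
  ~ bounded_set (path_component L x0).
Proof.
move=> cL oU [g [hh [gc [hhc [gK hhK]]]]].
rewrite continuous_open_subspace // in hhc.
exact: (path_component_unbounded hhc gK hhK gc oU cL).
Qed.

Section network_level_sets.
Variables (R : realType) (n : nat) (psi : R -> R).
Variables (Ls : seq ('M[R]_n * 'rV[R]_n)) (w : 'rV[R]_n) (c : R).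

Lemma net_fun_preimage t : injective psi ->
  net_fun psi Ls w c @^-1` [set psi t] =
  [set x | (hidden_layers psi Ls x *m w^T) 0 0 = t - c].
Proof.
move=> psiI; apply/seteqP; split => x /=; first by move=> /psiI <-; rewrite addrK.
by move=> xt; rewrite /net_fun -[t](subrK c) -xt.
Qed.

Lemma net_fun_continuous : continuous psi ->
  continuous (hidden_layers psi Ls) -> continuous (net_fun psi Ls w c).
Proof.
move=> psic hc.
have -> : net_fun psi Ls w c =
    psi \o (fun v : 'rV[R]_n => (v *m w^T + const_mx c) 0 0) \o hidden_layers psi Ls.
  by apply/funext => x; rewrite /= mxE [const_mx c 0 0]mxE.
move=> x; apply: continuous_comp (hc x) _; apply: continuous_comp _ (psic _).
have := continuous_comp
  (affine_mx_continuous (B := w^T) (c := const_mx c) (x := hidden_layers psi Ls x))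
  (@coord_continuous _ _ _ 0 0 _).
exact.
Qed.

End network_level_sets.

Theorem lemma3 (R : realType) (n : nat) (f : 'rV[R]_n -> R) :
  (2 <= n)%N -> nonsingular_net f ->
  (forall y : R, exists U : set 'rV[R]_(n.-1),
      open U /\ homeomorphic_sets (f @^-1` [set y]) U) /\
  (forall (y : R) (x : 'rV[R]_n), f x = y ->
      ~ bounded_set (path_component (f @^-1` [set y]) x)).
Proof.
case: n f => [|[|m]] f // _ [psi [psic [psiI [Ls [w [c [LsU [w0 ->]]]]]]]].
have [psii psiE] := continuous_injective_open_embedding psic psiI.
have [hi hE] := open_embedding_hidden_layers psiE LsU.
have level_homeo (y : R) : exists U : set 'rV[R]_m.+1,
    open U /\ homeomorphic_sets (net_fun psi Ls w c @^-1` [set y]) U.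
  have [[t _ <-]|Ny] := pselect (range psi y).
    by rewrite net_fun_preimage //; exact: hyperplane_preimage_homeomorphic_open hE w0.
  have -> : net_fun psi Ls w c @^-1` [set y] = set0.
    by apply/seteqP; split => [x /= fx|//]; apply: Ny; rewrite -fx; exact: imageT.
  exists set0; split; first exact: open0.
  exists (fun=> 0), (fun=> 0).
  by do ![split] => //; apply: continuous_subspaceT; exact: cst_continuous.
split=> // y x fxy; have [U [oU LU]] := level_homeo y.
apply: closed_homeomorphic_open_unbounded oU LU fxy.
apply: (continuous_closedP _).1.
  by case: hE => hc _ _ _; exact: net_fun_continuous.
exact/accessible_closed_set1/hausdorff_accessible/Rhausdorff.
Qed.
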